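(* Let $\mathbb{F}$ be a field and $\mathcal{H}_o=(Q_0,Q_1,\mathbb{B}^{\mathrm{oh}})$ an oriented hypergraph such that, in $F(\mathcal{H}_o)$, all hyperedges share a common nonempty source-side vertex set $S$ and the target-side vertex sets $H_1,\dots,H_r$ ($r=|Q_1|$) of the hyperedges are pairwise distinct. Then the macrograph of $F(\mathcal{H}_o)$ is a star, and $\delta(F(\mathcal{H}_o))>0$ if and only if the indicator vectors $\mathbf{1}_{H_1},\dots,\mathbf{1}_{H_r}\in\mathbb{F}^{Q_0}$ are affinely dependent over $\mathbb{F}$. In particular $\delta(F(\mathcal{H}_o))>0$ implies $r\ge4$.
   Context: An oriented hypergraph is $\mathcal{H}_o=(Q_0,Q_1,\mathbb{B}^{\mathrm{oh}})$ with finite sets $Q_0,Q_1$ and $\mathbb{B}^{\mathrm{oh}}\in\{-1,0,+1\}^{Q_0\times Q_1}$. For a hyperedge $e$, its source-side vertex set is $\{v:\mathbb{B}^{\mathrm{oh}}_{v,e}=-1\}$ and its target-side vertex set is $\{v:\mathbb{B}^{\mathrm{oh}}_{v,e}=+1\}$. $F(\mathcal{H}_o)=(Q_0,Q_1,\beta_F)$ has $\beta_F(\mathbf{1}_e)=(A_e,B_e)$ with $A_e$ the indicator vector (in $\mathbb{F}^{Q_0}=T^1(\mathbb{F}^{Q_0})$) of the source-side set and $B_e$ that of the target-side set. For this data: $\partial_\beta:\mathbf{1}_e\mapsto B_e-A_e$; $V_{\mathrm{macro}}=\{A_e\}\cup\{B_e\}$ (a set); the macrograph is the directed multigraph on $V_{\mathrm{macro}}$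 with edge set $Q_1$ and $e:A_e\to B_e$; $B_{\mathrm{macro}}:\mathbb{F}^{Q_1}\to\mathbb{F}^{V_{\mathrm{macro}}}$, $\mathbf{1}_e\mapsto\mathbf{1}_{B_e}-\mathbf{1}_{A_e}$; $\hat\phi:\mathbb{F}^{V_{\mathrm{macro}}}\to T(\mathbb{F}^{Q_0})$, $\mathbf{1}_w\mapsto w$; $\delta(F(\mathcal{H}_o))=\dim(\mathrm{Im}B_{\mathrm{macro}}\cap\mathrm{Ker}\hat\phi)$. A star is a directed multigraph with one centre vertex and all edges joining the centre to distinct leaves. *)

From HB Require Import structures.
From mathcomp Require Import all_boot all_order all_algebra.
Set Implicit Arguments. Unset Strict Implicit. Unset Printing Implicit Defensive.
Import Order.TTheory GRing.Theory Num.Theory.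
Local Open Scope ring_scope.

(* Q0 = 'I_n0 (vertices), Q1 = 'I_n1 (hyperedges); vectors in F^{Q0} are
   row vectors 'rV[F]_n0.  Linear maps act on row vectors by right
   multiplication, so images are row spaces and kernels are kermx. *)

Definition ind (F : fieldType) (n0 : nat) (X : {set 'I_n0}) : 'rV[F]_n0 :=
  \row_v ((v \in X)%:R).

Definition src_set (n0 n1 : nat) (B : 'M[int]_(n0, n1)) (e : 'I_n1) : {set 'I_n0} :=
  [set v | B v e == -1].
Definition tgt_set (n0 n1 : nat) (B : 'M[int]_(n0, n1)) (e : 'I_n1) : {set 'I_n0} :=
  [set v | B v e == 1].

Section Macro.
Variables (F : fieldType) (n0 n1 : nat) (A Bt : 'I_n1 -> 'rV[F]_n0).

Definition Vmacro : seq 'rV[F]_n0 :=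
  undup ([seq A e | e <- enum 'I_n1] ++ [seq Bt e | e <- enum 'I_n1]).

(* B_macro : F^{Q1} -> F^{V_macro}, 1_e |-> 1_{B_e} - 1_{A_e} *)
Definition Bmacro : 'M[F]_(n1, size Vmacro) :=
  \matrix_(e, i) (((i : nat) == index (Bt e) Vmacro)%:R
                  - ((i : nat) == index (A e) Vmacro)%:R).

(* phi-hat : F^{V_macro} -> F^{Q0} (= T^1(F^{Q0})), 1_w |-> w *)
Definition phihat : 'M[F]_(size Vmacro, n0) :=
  \matrix_(i, j) (nth 0 Vmacro i) 0 j.

Definition delta : nat := \rank (Bmacro :&: kermx phihat)%MS.
End Macro.

Definition is_star (T : eqType) (V : seq T) (E : finType) (s t : E -> T) : Prop :=
  exists2 c, c \in V &
    [/\ forall e, s e \in V /\ t e \in V,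
        forall e, (s e == c) (+) (t e == c),
        injective (fun e => if s e == c then t e else s e) &
        forall v, v \in V -> v = c \/ exists e, v = (if s e == c then t e else s e)].

Definition affinely_dependent (F : fieldType) (n r : nat) (x : 'I_r -> 'rV[F]_n) : Prop :=
  exists c : 'I_r -> F, [/\ exists i, c i != 0, \sum_i c i = 0 & \sum_i c i *: x i = 0].

Definition srcvec (F : fieldType) n0 n1 (B : 'M[int]_(n0, n1)) (e : 'I_n1) : 'rV[F]_n0 :=
  ind F (src_set B e).
Definition tgtvec (F : fieldType) n0 n1 (B : 'M[int]_(n0, n1)) (e : 'I_n1) : 'rV[F]_n0 :=
  ind F (tgt_set B e).

From HB Require Import structures.
From mathcomp Require Import all_boot all_order all_algebra zify.
Set Implicit Arguments. Unset Strict Implicit. Unset Printing Implicit Defensive.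
Import GRing.Theory.
Local Open Scope ring_scope.

(* All sources equal the indicator c of S, and the targets are distinct
   indicators different from c, so the macrograph is the star centred at c and
   B_macro is injective (the column of a target vertex is the indicator of its
   unique edge).  Hence delta > 0 iff the vectors 1_{H_e} - c are linearly
   dependent.  A vertex of S lies in no H_e; at that coordinate a dependence
   forces the coefficients to sum to zero, which turns linear dependence of the
   1_{H_e} - c into affine dependence of the 1_{H_e}.  For r <= 3 distinct 0/1
   vectors this is impossible: at each coordinate the coefficients split into
   two zero-sum groups, one of size at most 1, so any two nonzero coefficients
   lie on the same side at every coordinate and their sets coincide. *)

Definition linearly_dependent (F : fieldType) (n r : nat) (x : 'I_r -> 'rV[F]_n) : Prop :=
  exists c : 'I_r -> F, (exists i, c i != 0) /\ \sum_i c i *: x i = 0.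

Lemma rank_cap_kermx_gt0 (F : fieldType) (m k n : nat)
    (M : 'M[F]_(m, k)) (P : 'M[F]_(k, n)) :
  row_free M ->
  (0 < \rank (M :&: kermx P))%N <-> exists2 x : 'rV[F]_m, x != 0 & x *m M *m P = 0.
Proof.
move=> freeM; rewrite lt0n mxrank_eq0; split.
  case/rowV0Pn=> w; rewrite sub_capmx => /andP[/submxP[x ->]].
  by rewrite sub_kermx (mulmx_free_eq0 _ freeM) => /eqP xMP x_neq0; exists x.
case=> x x_neq0 xMP; apply/rowV0Pn; exists (x *m M).
  by rewrite sub_capmx submxMl sub_kermx xMP /=.
by rewrite (mulmx_free_eq0 _ freeM).
Qed.

Lemma eq_linearly_dependent (F : fieldType) (n r : nat) (x y : 'I_r -> 'rV[F]_n) :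
  (forall i, x i = y i) -> linearly_dependent x <-> linearly_dependent y.
Proof.
move=> xy; split=> -[a [nz dep]]; exists a; split=> //.
  by under eq_bigr do rewrite -xy.
by under eq_bigr do rewrite xy.
Qed.

Lemma linearly_dependent_translate (F : fieldType) (n r : nat) (x : 'I_r -> 'rV[F]_n)
    (c : 'rV[F]_n) (j : 'I_n) :
  c 0 j != 0 -> (forall i, x i 0 j = 0) ->
  linearly_dependent (fun i => x i - c) <-> affinely_dependent x.
Proof.
move=> cj_neq0 xj0.
have translate a : \sum_i a i *: (x i - c) = \sum_i a i *: x i - (\sum_i a i) *: c.
  by rewrite scaler_suml -sumrB; apply: eq_bigr => i _; rewrite scalerBr.
split=> [[a [nz dep]] | [a [nz sum0 dep]]]; last first.
  by exists a; rewrite translate sum0 dep scale0r subr0.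
have sum0 : \sum_i a i = 0.
  move: dep => /rowP/(_ j); rewrite translate !mxE summxE big1 => [|i _]; last first.
    by rewrite !mxE xj0 mulr0.
  by rewrite sub0r => /eqP; rewrite oppr_eq0 mulf_eq0 (negbTE cj_neq0) orbF => /eqP.
by exists a; split=> //; move: dep; rewrite translate sum0 scale0r subr0.
Qed.

Section Macrograph.
Variables (F : fieldType) (n0 n1 : nat) (A Bt : 'I_n1 -> 'rV[F]_n0).
Local Notation V := (Vmacro A Bt).

Lemma mem_Vmacro_src e : A e \in V.
Proof. by rewrite mem_undup mem_cat map_f ?mem_enum. Qed.

Lemma mem_Vmacro_tgt e : Bt e \in V.
Proof. by rewrite mem_undup mem_cat orbC map_f ?mem_enum. Qed.

Lemma Vmacro_memP w : w \in V -> (exists e, w = A e) \/ (exists e, w = Bt e).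
Proof.
by rewrite mem_undup mem_cat => /orP[] /mapP[e _ ->]; [left | right]; exists e.
Qed.

Definition Vindex w (wV : w \in V) : 'I_(size V) := Ordinal (etrans (index_mem w V) wV).

Lemma row_Bmacro e :
  row e (Bmacro A Bt) =
  delta_mx 0 (Vindex (mem_Vmacro_tgt e)) - delta_mx 0 (Vindex (mem_Vmacro_src e)).
Proof. by apply/rowP => i; rewrite !mxE. Qed.

Lemma delta_mx_phihat w (wV : w \in V) : delta_mx 0 (Vindex wV) *m phihat A Bt = w.
Proof. by rewrite -rowE; apply/rowP => j; rewrite !mxE nth_index. Qed.

Lemma mulmx_Bmacro_phihat (x : 'rV[F]_n1) :
  x *m Bmacro A Bt *m phihat A Bt = \sum_e x 0 e *: (Bt e - A e).
Proof.
rewrite -mulmxA mulmx_sum_row; apply: eq_bigr => e _.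
by rewrite row_mul row_Bmacro mulmxBl !delta_mx_phihat.
Qed.

Hypotheses (Bt_inj : injective Bt) (Bt_neq_A : forall e e', Bt e != A e').

Lemma Vmacro_star c : (0 < n1)%N -> (forall e, A e = c) -> is_star V A Bt.
Proof.
move=> n1_gt0 A_c; exists c; first by rewrite -(A_c (Ordinal n1_gt0)) mem_Vmacro_src.
split=> [e | e | e e' | w /Vmacro_memP[] [e ->]].
- by rewrite mem_Vmacro_src mem_Vmacro_tgt.
- by rewrite -(A_c e) eqxx (negbTE (Bt_neq_A e e)).
- by rewrite /= !A_c eqxx => /Bt_inj.
- by left.
- by right; exists e; rewrite A_c eqxx.
Qed.

Lemma Bmacro_tgt_col e e' : Bmacro A Bt e' (Vindex (mem_Vmacro_tgt e)) = (e' == e)%:R.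
Proof.
rewrite mxE /= !(inj_in_eq (@index_inj _ 0 V)) ?mem_Vmacro_tgt ?mem_Vmacro_src //.
by rewrite (negbTE (Bt_neq_A _ _)) subr0 (inj_eq Bt_inj) eq_sym.
Qed.

Lemma Bmacro_row_free : row_free (Bmacro A Bt).
Proof.
apply: inj_row_free => x x0; apply/rowP => e.
have /rowP/(_ (Vindex (mem_Vmacro_tgt e))) := x0.
rewrite !mxE (bigD1 e) //= big1 => [|e' ne'].
  by rewrite Bmacro_tgt_col eqxx mulr1 addr0.
by rewrite Bmacro_tgt_col (negbTE ne') mulr0.
Qed.

Lemma delta_gt0_iff :
  (0 < delta A Bt)%N <-> linearly_dependent (fun e => Bt e - A e).
Proof.
rewrite /delta rank_cap_kermx_gt0 ?Bmacro_row_free //; split.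
  case=> x /rV0Pn x_neq0; rewrite mulmx_Bmacro_phihat => dep.
  by exists (fun e => x 0 e).
case=> c [[i ci] dep]; exists (\row_e c e).
  by apply/rV0Pn; exists i; rewrite mxE.
by rewrite mulmx_Bmacro_phihat; under eq_bigr do rewrite mxE.
Qed.
End Macrograph.

Lemma ind_inj (F : fieldType) (n : nat) : injective (@ind F n).
Proof.
move=> X Y /rowP XY; apply/setP => v; move: (XY v); rewrite !mxE.
by case: (v \in X); case: (v \in Y) => // /eqP; rewrite ?oner_eq0 // eq_sym oner_eq0.
Qed.

Lemma sum_ind_coord (F : fieldType) (n r : nat) (a : 'I_r -> F) (H : 'I_r -> {set 'I_n}) v :
  (\sum_i a i *: ind F (H i)) 0 v = \sum_(i in [set i | v \in H i]) a i.
Proof.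
rewrite summxE [RHS]big_mkcond; apply: eq_bigr => i _.
by rewrite !mxE inE; case: (v \in H i); rewrite ?mulr1 ?mulr0.
Qed.

Lemma exists_two_neq0 (F : fieldType) (r : nat) (a : 'I_r -> F) i :
  a i != 0 -> \sum_l a l = 0 -> exists2 j, j != i & a j != 0.
Proof.
move=> ai_neq0 sum0.
case: (pickP [pred j | (j != i) && (a j != 0)]) => [j /andP[] | others0]; first by exists j.
move: sum0; rewrite (bigD1 i) //= big1 ?addr0 => [ai0 | j ji].
  by rewrite ai0 eqxx in ai_neq0.
by have := others0 j; rewrite /= ji => /negbFE/eqP.
Qed.

Lemma zero_sum_support_card (F : fieldType) (r : nat) (a : 'I_r -> F) (U : {set 'I_r}) k :
  \sum_(l in U) a l = 0 -> k \in U -> a k != 0 -> (1 < #|U|)%N.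
Proof.
move=> sum0 kU; apply: contraTT; rewrite -leqNgt => U_le1; apply/negPn/eqP.
have : #|U :\ k| = 0%N by move: U_le1; rewrite (cardsD1 k U) kU; lia.
by move/cards0_eq => Uk0; rewrite -sum0 (big_setD1 k kU) /= Uk0 big_set0 addr0.
Qed.

Lemma zero_sum_partition_small (F : fieldType) (r : nat) (a : 'I_r -> F)
    (T : {set 'I_r}) i j :
  (r <= 3)%N -> \sum_(l in T) a l = 0 -> \sum_(l in ~: T) a l = 0 ->
  a i != 0 -> a j != 0 -> (i \in T) = (j \in T).
Proof.
move=> r_le3 sumT sumCT ai_neq0 aj_neq0.
have := cardsC T; rewrite card_ord => cardT.
have split_card k l : k \in T -> l \notin T -> a k != 0 -> a l != 0 -> False.
  move=> kT lT ak al; have := zero_sum_support_card sumT kT ak.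
  have := zero_sum_support_card sumCT (_ : l \in ~: T) al.
  by rewrite in_setC => /(_ lT); lia.
case: (boolP (i \in T)) => iT; case: (boolP (j \in T)) => jT //; exfalso.
  exact: split_card iT jT ai_neq0 aj_neq0.
exact: split_card jT iT aj_neq0 ai_neq0.
Qed.

Lemma affinely_dependent_ind_ge4 (F : fieldType) (n r : nat) (H : 'I_r -> {set 'I_n}) :
  injective H -> affinely_dependent (fun i => ind F (H i)) -> (4 <= r)%N.
Proof.
move=> H_inj [a [[i ai_neq0] sum0 dep]]; rewrite leqNgt ltnS; apply/negP => r_le3.
have [j ji aj_neq0] := exists_two_neq0 ai_neq0 sum0.
move/negP: ji; apply; apply/eqP/H_inj/setP => v.
pose T := [set l | v \in H l].
have sumT : \sum_(l in T) a l = 0 by rewrite -sum_ind_coord dep mxE.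
have sumCT : \sum_(l in ~: T) a l = 0.
  rewrite -[RHS]sum0 [RHS](bigID (mem T)) /= sumT add0r.
  by apply: eq_bigl => l; rewrite in_setC.
by have := zero_sum_partition_small r_le3 sumT sumCT aj_neq0 ai_neq0; rewrite !inE.
Qed.

Theorem proposition7p9 (F : fieldType) (n0 n1 : nat) (B : 'M[int]_(n0, n1)) :
  (forall v e, B v e \in [:: -1; 0; 1]) ->
  (0 < n1)%N ->
  (exists S : {set 'I_n0}, S != set0 /\ forall e, src_set B e = S) ->
  injective (tgt_set B) ->
  [/\ is_star (Vmacro (srcvec F B) (tgtvec F B)) (srcvec F B) (tgtvec F B),
      (0 < delta (srcvec F B) (tgtvec F B))%N <-> affinely_dependent (tgtvec F B)
    & (0 < delta (srcvec F B) (tgtvec F B))%N -> (4 <= n1)%N].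
Proof.
move=> _ n1_gt0 [S [S_neq0 srcS]] tgt_inj.
have src_ind e : srcvec F B e = ind F S by rewrite /srcvec srcS.
have [v0 v0S] := set0Pn _ S_neq0.
have tgt_v0 e : tgtvec F B e 0 v0 = 0.
  have : v0 \in src_set B e by rewrite srcS.
  by rewrite !mxE !inE => /eqP ->.
have S_v0 : ind F S 0 v0 != 0 by rewrite mxE v0S oner_eq0.
have tgt_neq_src e e' : tgtvec F B e != srcvec F B e'.
  by rewrite src_ind; apply: contraNneq S_v0 => <-; rewrite tgt_v0.
have tgtvec_inj : injective (tgtvec F B) by move=> e e' /ind_inj /tgt_inj.
have delta_affine :
    (0 < delta (srcvec F B) (tgtvec F B))%N <-> affinely_dependent (tgtvec F B).
  rewrite delta_gt0_iff // (eq_linearly_dependent (y := fun e => tgtvec F B e - ind F S)).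
    exact: linearly_dependent_translate S_v0 tgt_v0.
  by move=> e; rewrite src_ind.
split=> //; first exact: Vmacro_star n1_gt0 src_ind.
by move/delta_affine; apply: affinely_dependent_ind_ge4 tgt_inj.
Qed.
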